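(* Let $X$ come from the $J$-state HMM of the context, let $L_0\in\mathbb N$, $L\ge0$, and let $h_1,\dots,h_{L_0}$ be functions for which the expectations below are finite. Define $M^x=(E_H[h_l(X_1)K_L(x,X_2)h_m(X_3)])_{l,m\le L_0}$, $P=(E_H[h_l(X_1)h_m(X_3)])_{l,m\le L_0}$, $D^x=\mathrm{diag}(K_L[f_j](x))_{j\le J}$, $O=(E_H[h_l(X_1)\mid\theta_1=j])_{l\le L_0,j\le J}$. Then $$M^x=O\,\mathrm{diag}(\pi)\,Q\,D^x\,Q\,O^\intercal,\qquad P=O\,\mathrm{diag}(\pi)\,Q^2\,O^\intercal.$$ Moreover, if $V\in\mathbb R^{L_0\times J}$ is such that $V^\intercal PV$ is invertible, then $B^x:=(V^\intercal PV)^{-1}V^\intercal M^xV$ satisfies $$B^x=(QO^\intercal V)^{-1}D^x(QO^\intercal V),$$ so the matrices $(B^x:x\in\mathbb R)$ are simultaneously diagonalisable, $B^x$ having eigenvalues $(K_L[f_j](x))_{j\le J}$.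
   Context: $J$-state HMM: $\theta=(\theta_n)$ is a Markov chain on $\{1,\dots,J\}$ with transition matrix $Q$ and $\theta_1\sim\pi$; given $\theta$, the $X_n$ are independent with Lebesgue densities $f_{\theta_n}$; $E_H$ is expectation under this model. $K$ is a bounded Lipschitz function supported in $[-1,1]$, $K_L(x,y)=2^LK(2^L(x-y))$ and $K_L[f](x)=\int K_L(x,y)f(y)\,dy$. *)

From HB Require Import structures.
From mathcomp Require Import all_boot all_order all_algebra.
From mathcomp Require Import all_classical all_reals all_analysis.
Set Implicit Arguments. Unset Strict Implicit. Unset Printing Implicit Defensive.
Import Order.TTheory GRing.Theory Num.Theory.
Local Open Scope ring_scope.

Section HMMdefs.
Variable R : realType.
Notation leb := (@lebesgue_measure R).

Definition KL (K : R -> R) (L : nat) (x y : R) : R :=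
  2 ^+ L * K (2 ^+ L * (x - y)).

Definition KLf (K : R -> R) (L : nat) (g : R -> R) (x : R) : R :=
  Rintegral leb setT (fun y => KL K L x y * g y).

(* J-state HMM with initial law pi, transition matrix Q and emission
   densities f j (state j : 'I_J).  Expectation E_H[g(X_1,X_2,X_3)],
   computed by conditioning on (theta_1,theta_2,theta_3):
   sum_{j1 j2 j3} pi_{j1} Q_{j1 j2} Q_{j2 j3} E[g(X1,X2,X3) | theta = (j1,j2,j3)],
   the conditional law of (X1,X2,X3) having density f j1 (x) f j2 (x) f j3. *)
Definition hmmE3 (J : nat) (pi : 'rV[R]_J) (Q : 'M[R]_J) (f : 'I_J -> R -> R)
    (g : R -> R -> R -> R) : R :=
  \sum_(j1 < J) \sum_(j2 < J) \sum_(j3 < J)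
    pi 0 j1 * Q j1 j2 * Q j2 j3 *
    fine (\int[leb]_x1 \int[leb]_x2 \int[leb]_x3
            ((g x1 x2 x3 * f j1 x1 * f j2 x2 * f j3 x3)%:E))%E.

Definition hmmCond1 (J : nat) (f : 'I_J -> R -> R) (h : R -> R) (j : 'I_J) : R :=
  Rintegral leb setT (fun x => h x * f j x).

Definition Mmat (J L0 : nat) (pi : 'rV[R]_J) (Q : 'M[R]_J) (f : 'I_J -> R -> R)
    (K : R -> R) (L : nat) (h : 'I_L0 -> R -> R) (x : R) : 'M[R]_(L0, L0) :=
  \matrix_(l < L0, m < L0)
     hmmE3 pi Q f (fun x1 x2 x3 => h l x1 * KL K L x x2 * h m x3).

Definition Pmat (J L0 : nat) (pi : 'rV[R]_J) (Q : 'M[R]_J) (f : 'I_J -> R -> R)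
    (h : 'I_L0 -> R -> R) : 'M[R]_(L0, L0) :=
  \matrix_(l < L0, m < L0) hmmE3 pi Q f (fun x1 _ x3 => h l x1 * h m x3).

Definition Dmat (J : nat) (f : 'I_J -> R -> R) (K : R -> R) (L : nat) (x : R)
    : 'M[R]_J :=
  diag_mx (\row_(j < J) KLf K L (f j) x).

Definition Omat (J L0 : nat) (f : 'I_J -> R -> R) (h : 'I_L0 -> R -> R)
    : 'M[R]_(L0, J) :=
  \matrix_(l < L0, j < J) hmmCond1 f (h l) j.

Definition Bmat (J L0 : nat) (M P : 'M[R]_(L0, L0)) (V : 'M[R]_(L0, J)) : 'M[R]_J :=
  invmx (V^T *m P *m V) *m (V^T *m M *m V).

End HMMdefs.

From HB Require Import structures.
From mathcomp Require Import all_boot all_order all_algebra.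
From mathcomp Require Import all_classical all_reals all_analysis.
From mathcomp Require Import ring measurable_realfun.
Set Implicit Arguments. Unset Strict Implicit. Unset Printing Implicit Defensive.
Import Order.TTheory GRing.Theory Num.Theory.
Import numFieldNormedType.Exports.
Local Open Scope ring_scope.

(* Conditioning on the hidden states (theta_1, theta_2, theta_3), under which
   X_1, X_2, X_3 are independent, every entry of M^x is a sum over (j1, j2, j3)
   of pi_j1 Q_j1j2 Q_j2j3 times the product of three one-dimensional integrals
   E[h_l(X_1) | theta_1 = j1], K_L[f_j2](x) and E[h_m(X_3) | theta_3 = j3]: this
   is the (l, m) entry of O diag(pi) Q D^x Q O^T.  P is the case D^x = I, since
   each f_j integrates to 1.  With A = V^T O diag(pi) Q and S = Q O^T V we get
   V^T P V = A S and V^T M^x V = A D^x S, so invertibility of V^T P V forces S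
   to be invertible and B^x = S^-1 D^x S, which has the characteristic
   polynomial of the diagonal matrix D^x. *)

Lemma char_poly_conj (R : comUnitRingType) n (S A : 'M[R]_n) :
  S \in unitmx -> char_poly (invmx S *m A *m S) = char_poly A.
Proof.
move=> S_unit; rewrite /char_poly /char_poly_mx.
have -> : 'X%:M - map_mx polyC (invmx S *m A *m S) =
    map_mx polyC (invmx S) *m ('X%:M - map_mx polyC A) *m map_mx polyC S.
  rewrite mulmxBr mulmxBl !map_mxM; congr (_ - _).
  by rewrite mul_mx_scalar -scalemxAl -map_mxM mulVmx // map_mx1 scalemx1.
by rewrite !det_mulmx mulrAC -det_mulmx -map_mxM mulVmx // map_mx1 det1 mul1r.
Qed.

Lemma invmx_mul_conj (R : comUnitRingType) n (A S D : 'M[R]_n) :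
  A *m S \in unitmx -> invmx (A *m S) *m (A *m D *m S) = invmx S *m D *m S.
Proof.
move=> AS_unit; have S_unit : S \in unitmx.
  by move: AS_unit; rewrite unitmx_mul => /andP[].
have -> : A *m D *m S = A *m S *m (invmx S *m D *m S).
  by rewrite !mulmxA mulmxK.
by rewrite mulKmx.
Qed.

Lemma mulmx_diag_chainE (R : comNzRingType) m n J (O : 'M[R]_(m, J))
    (O' : 'M[R]_(n, J)) (p d : 'rV[R]_J) (Q : 'M[R]_J) l k :
  (O *m diag_mx p *m Q *m diag_mx d *m Q *m O'^T) l k =
  \sum_(j1 < J) \sum_(j2 < J) \sum_(j3 < J)
     p 0 j1 * Q j1 j2 * Q j2 j3 * (O l j1 * d 0 j2 * O' k j3).
Proof.
rewrite !mul_mx_diag mxE.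
under eq_bigr => j3 _.
  rewrite !mxE big_distrl /=.
  under eq_bigr => j2 _ do rewrite !mxE !big_distrl /=.
  over.
rewrite exchange_big /=.
under eq_bigr do rewrite exchange_big /=.
rewrite exchange_big /=.
apply: eq_bigr => j1 _; apply: eq_bigr => j2 _; apply: eq_bigr => j3 _.
rewrite !mxE; ring.
Qed.

Section integral_product.
Variable R : realType.

Lemma integralZl_EFin d (T : measurableType d) (mu : {measure set T -> \bar R})
    (c : T -> R) (k : R) :
  mu.-integrable setT (fun x => (c x)%:E) ->
  (\int[mu]_x (k * c x)%:E = (k * Rintegral mu setT c)%:E)%E.
Proof.
move=> c_int; under eq_integral do rewrite EFinM.
by rewrite integralZl //= /Rintegral EFinM fineK //; exact: integrable_fin_num.
Qed.

Lemma iterated_integral3_mul d1 d2 d3 (T1 : measurableType d1)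
    (T2 : measurableType d2) (T3 : measurableType d3)
    (mu1 : {measure set T1 -> \bar R}) (mu2 : {measure set T2 -> \bar R})
    (mu3 : {measure set T3 -> \bar R}) (a : T1 -> R) (b : T2 -> R) (c : T3 -> R) :
  mu1.-integrable setT (fun x => (a x)%:E) ->
  mu2.-integrable setT (fun y => (b y)%:E) ->
  mu3.-integrable setT (fun z => (c z)%:E) ->
  fine (\int[mu1]_x \int[mu2]_y \int[mu3]_z (a x * b y * c z)%:E)%E =
  Rintegral mu1 setT a * Rintegral mu2 setT b * Rintegral mu3 setT c.
Proof.
move=> a_int b_int c_int.
under eq_integral => x _ do under eq_integral => y _ do rewrite integralZl_EFin //.
under eq_integral => x _ do under eq_integral => y _ do rewrite mulrAC.
under eq_integral => x _ do rewrite integralZl_EFin //.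
under eq_integral => x _ do rewrite -mulrA mulrC.
by rewrite integralZl_EFin //=; ring.
Qed.

End integral_product.

Lemma lipschitz_continuous (R : realFieldType) (K : R -> R) (C : R) :
  (forall y z, `|K y - K z| <= C * `|y - z|) -> continuous K.
Proof.
move=> K_lip y; apply/cvgrPdist_lt => e e_gt0.
have C1_gt0 : 0 < `|C| + 1 by rewrite ltr_wpDl.
near=> z.
have yz_small : `|y - z| < e / (`|C| + 1).
  near: z; apply: (@cvgr_dist_lt _ _ _ _ _ id y cvg_id); exact: divr_gt0.
apply: le_lt_trans (K_lip y z) _.
apply: (@le_lt_trans _ _ ((`|C| + 1) * `|y - z|)).
  by rewrite ler_wpM2r // (le_trans (ler_norm C)) // lerDl.
by rewrite mulrC -ltr_pdivlMr.
Unshelve. all: by end_near.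
Qed.

Lemma ge0_integrable (R : realType) d (T : measurableType d)
    (mu : {measure set T -> \bar R}) (g : T -> R) :
  measurable_fun setT g -> (forall x, 0 <= g x) ->
  (\int[mu]_x (g x)%:E < +oo)%E -> mu.-integrable setT (fun x => (g x)%:E).
Proof.
move=> g_meas g_ge0 g_fin; apply/integrableP; split; first exact/measurable_EFinP.
by under eq_integral do rewrite abse_EFin ger0_norm //.
Qed.

Section Bmat.
Variables (R : realType) (L0 J : nat).
Variables (X : 'M[R]_(L0, J)) (Y : 'M[R]_(J, L0)) (V : 'M[R]_(L0, J)).

Let denomE : V^T *m (X *m Y) *m V = V^T *m X *m (Y *m V).
Proof. by rewrite !mulmxA. Qed.

Lemma Bmat_conj_unitmx : V^T *m (X *m Y) *m V \in unitmx -> Y *m V \in unitmx.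
Proof. by rewrite denomE unitmx_mul => /andP[]. Qed.

Lemma Bmat_conj (D : 'M[R]_J) : V^T *m (X *m Y) *m V \in unitmx ->
  Bmat (X *m D *m Y) (X *m Y) V = invmx (Y *m V) *m D *m (Y *m V).
Proof.
have numerE : V^T *m (X *m D *m Y) *m V = V^T *m X *m D *m (Y *m V).
  by rewrite !mulmxA.
by rewrite /Bmat denomE numerE; apply: invmx_mul_conj.
Qed.

End Bmat.

Section hmm.
Variable R : realType.
Notation leb := (@lebesgue_measure R).

Lemma KL_mul_integrable (K : R -> R) (C : R) L x (g : R -> R) :
  measurable_fun setT K -> (forall y, `|K y| <= C) ->
  leb.-integrable setT (fun y => (g y)%:E) ->
  leb.-integrable setT (fun y => (KL K L x y * g y)%:E).
Proof.
move=> K_meas K_bdd g_int.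
have g_meas : measurable_fun setT g.
  by apply/measurable_EFinP; case/integrableP: g_int.
apply: (le_integrable _ _ _ (integrableZl measurableT (2 ^+ L * C) g_int)) => //.
  apply/measurable_EFinP; apply: measurable_funM => //.
  rewrite /KL; apply: measurable_funM => //.
  apply: measurableT_comp => //.
  by apply: measurable_funM => //; exact: measurable_funB.
move=> y _; rewrite -EFinM !abse_EFin lee_fin /KL !normrM ler_wpM2r //.
by rewrite ler_wpM2l // (le_trans (K_bdd _)) // ler_norm.
Qed.

Variables (J : nat) (pi : 'rV[R]_J) (Q : 'M[R]_J) (f : 'I_J -> R -> R).
Hypothesis f_int : forall j, leb.-integrable setT (fun x => (f j x)%:E).

Lemma hmmE3_mul (g : R -> R -> R -> R) (a b c : R -> R) :
  (forall x1 x2 x3, g x1 x2 x3 = a x1 * b x2 * c x3) ->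
  (forall j, leb.-integrable setT (fun x => (a x * f j x)%:E)) ->
  (forall j, leb.-integrable setT (fun x => (b x * f j x)%:E)) ->
  (forall j, leb.-integrable setT (fun x => (c x * f j x)%:E)) ->
  hmmE3 pi Q f g =
  \sum_(j1 < J) \sum_(j2 < J) \sum_(j3 < J) pi 0 j1 * Q j1 j2 * Q j2 j3 *
    (hmmCond1 f a j1 * hmmCond1 f b j2 * hmmCond1 f c j3).
Proof.
move=> g_mul a_int b_int c_int.
apply: eq_bigr => j1 _; apply: eq_bigr => j2 _; apply: eq_bigr => j3 _.
congr (_ * _); rewrite /hmmCond1.
transitivity (fine (\int[leb]_x1 \int[leb]_x2 \int[leb]_x3
  ((a x1 * f j1 x1) * (b x2 * f j2 x2) * (c x3 * f j3 x3))%:E))%E.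
  apply: congr1; apply: eq_integral => x1 _.
  apply: eq_integral => x2 _; apply: eq_integral => x3 _.
  by rewrite g_mul; congr EFin; ring.
exact: iterated_integral3_mul.
Qed.

Variables (L0 : nat) (h : 'I_L0 -> R -> R).
Hypothesis h_int : forall l j, leb.-integrable setT (fun x => (h l x * f j x)%:E).

Lemma Mmat_factor (K : R -> R) (C : R) L x :
  measurable_fun setT K -> (forall y, `|K y| <= C) ->
  Mmat pi Q f K L h x =
  Omat f h *m diag_mx pi *m Q *m Dmat f K L x *m Q *m (Omat f h)^T.
Proof.
move=> K_meas K_bdd; apply/matrixP => l m.
rewrite mulmx_diag_chainE mxE (@hmmE3_mul _ (h l) (KL K L x) (h m)) //.
  by apply: eq_bigr => j1 _; apply: eq_bigr => j2 _; apply: eq_bigr => j3 _; rewrite !mxE.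
by move=> j; exact: KL_mul_integrable K_meas K_bdd (f_int j).
Qed.

Lemma Pmat_factor :
  (forall j, (\int[leb]_x (f j x)%:E = 1)%E) ->
  Pmat pi Q f h = Omat f h *m diag_mx pi *m (Q *m Q) *m (Omat f h)^T.
Proof.
move=> f_mass.
have cond1_one j : hmmCond1 f (fun=> 1) j = 1.
  by rewrite /hmmCond1 /Rintegral; under eq_integral do rewrite mul1r; rewrite f_mass.
have -> : Q *m Q = Q *m diag_mx (const_mx 1) *m Q by rewrite diag_const_mx mulmx1.
apply/matrixP => l m; rewrite !mulmxA mulmx_diag_chainE mxE.
have one_int j : leb.-integrable setT (fun x => (1 * f j x)%:E).
  by under eq_fun do rewrite mul1r.
rewrite (@hmmE3_mul _ (h l) (fun=> 1) (h m)) //; last by move=> *; rewrite mulr1.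
apply: eq_bigr => j1 _; apply: eq_bigr => j2 _; apply: eq_bigr => j3 _.
by rewrite !mxE cond1_one mulr1.
Qed.

End hmm.

Theorem lemma11 (R : realType) (J : nat) (pi : 'rV[R]_J) (Q : 'M[R]_J)
  (f : 'I_J -> R -> R) (K : R -> R) (L L0 : nat) (h : 'I_L0 -> R -> R)
  (* HMM: pi is a probability vector, Q a transition matrix *)
  (pi_ge0 : forall j, 0 <= pi 0 j) (pi_sum1 : \sum_(j < J) pi 0 j = 1)
  (Q_ge0 : forall i j, 0 <= Q i j) (Q_row1 : forall i, \sum_(j < J) Q i j = 1)
  (* emission densities *)
  (f_meas : forall j, measurable_fun setT (f j))
  (f_ge0 : forall j x, 0 <= f j x)
  (f_int1 : forall j, (\int[@lebesgue_measure R]_x (f j x)%:E = 1)%E)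
  (* K bounded, Lipschitz, supported in [-1,1] *)
  (K_bdd : exists C : R, forall y, `|K y| <= C)
  (K_lip : exists C : R, forall y z, `|K y - K z| <= C * `|y - z|)
  (K_supp : forall y, 1 < `|y| -> K y = 0)
  (* the h_l have finite (conditional) expectations *)
  (h_meas : forall l, measurable_fun setT (h l))
  (h_int : forall l j, (@lebesgue_measure R).-integrable setT
                          (fun x => (h l x * f j x)%:E)) :
  let M := Mmat pi Q f K L h in
  let P := Pmat pi Q f h in
  let O := Omat f h in
  let D := Dmat f K L in
  (forall x, M x = O *m diag_mx pi *m Q *m D x *m Q *m O^T) /\
  P = O *m diag_mx pi *m (Q *m Q) *m O^T /\
  (forall V : 'M[R]_(L0, J), V^T *m P *m V \in unitmx ->
     let S := Q *m O^T *m V in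
     S \in unitmx /\
     (forall x, Bmat (M x) P V = invmx S *m D x *m S) /\
     (forall x, char_poly (Bmat (M x) P V) =
                \prod_(j < J) ('X - (KLf K L (f j) x)%:P))).
Proof.
move=> M P O D.
have [CK K_le] := K_bdd; have [LK K_lipC] := K_lip.
have K_meas := continuous_measurable_fun (lipschitz_continuous K_lipC).
have f_int j : (@lebesgue_measure R).-integrable setT (fun x => (f j x)%:E).
  apply: (@ge0_integrable _ _ _ (@lebesgue_measure R)) => //; first exact: f_meas.
  by rewrite f_int1 ltry.
have M_factor x : M x = O *m diag_mx pi *m Q *m D x *m Q *m O^T :=
  Mmat_factor pi Q f_int h_int L x K_meas K_le.
have P_factor : P = O *m diag_mx pi *m (Q *m Q) *m O^T :=
  Pmat_factor pi Q f_int h_int f_int1.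
split; first exact: M_factor.
split; first exact: P_factor.
(* Only the factorisations matter from here on; with the bodies visible,
   conversion checks would unfold the integrals defining M and P. *)
clearbody M P O; move=> V PV S.
have P_XY : P = O *m diag_mx pi *m Q *m (Q *m O^T) by rewrite P_factor !mulmxA.
have M_XDY x : M x = O *m diag_mx pi *m Q *m D x *m (Q *m O^T).
  by rewrite M_factor !mulmxA.
rewrite P_XY in PV *.
have S_unit : S \in unitmx by apply: Bmat_conj_unitmx PV.
have B_conj x : Bmat (M x) (O *m diag_mx pi *m Q *m (Q *m O^T)) V = invmx S *m D x *m S.
  by rewrite M_XDY Bmat_conj.
split; first exact: S_unit.
split; first exact: B_conj.
move=> x; rewrite B_conj char_poly_conj // char_poly_trig ?diag_mx_is_trig //.
by apply: eq_bigr => j _; rewrite !mxE eqxx mulr1n.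
Qed.
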